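(* Let $P,F,A_I,A_O,B_I,B_O$ be finite-dimensional Hilbert spaces with $d_{A_I}=d_{A_O}=:d_A$, $d_{B_I}=d_{B_O}=:d_B$, $d_P=d_F$, and let $W=|w\rangle\langle w|$ be a pure process on $PFA_IA_OB_IB_O$ with induced map $\mathcal{G}$. Then $\mathcal{G}$ admits a decomposition into consistent causal reference frames: there exist finite-dimensional Hilbert spaces $E_A,E_B$ with $d_P=d_Ad_{E_A}=d_Bd_{E_B}$, a frame function $(\Pi_A,\Phi_A)$ for Alice and a frame function $(\Pi_B,\Phi_B)$ for Bob such that for all unitaries $U_A:A_I\to A_O$ and $U_B:B_I\to B_O$, $$\mathcal{G}(U_A,U_B)=\Phi_A(U_B)(U_A\otimes\mathbb{1}^{E_A})\Pi_A(U_B)=\Phi_B(U_A)(U_B\otimes\mathbb{1}^{E_B})\Pi_B(U_A).$$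
   Context: All Hilbert spaces are finite-dimensional with fixed computational bases; juxtaposition denotes tensor product. For a linear map $K:X\to Y$, $|K\rangle\!\rangle^{XY}=\sum_i|i\rangle^X\otimes(K|i\rangle)^Y$. For $|w\rangle=\sum_{x,y}w_{xy}|x\rangle^X|y\rangle^Y$, $|w\rangle^{T_X}:=\sum_{x,y}w_{xy}|y\rangle\langle x|:X\to Y$; for an operator $W$ on $X\otimes Y$, $W^{T_X}$ is its partial transpose on $X$. The Choi operator of $\mathcal{M}:\mathcal{L}(X)\to\mathcal{L}(Y)$ is $\sum_{ij}|i\rangle\langle j|\otimes\mathcal{M}(|i\rangle\langle j|)$. A process matrix is an operator $W$ on $PFA_IA_OB_IB_O$ such that for all finite-dimensional ancilla spaces $A_I',A_O',B_I',B_O'$ and all CPTP maps $\mathcal{M}_x:\mathcal{L}(A_IA_I')\to\mathcal{L}(A_OA_O')$, $\mathcal{M}_y:\mathcal{L}(B_IB_I')\to\mathcal{L}(B_OB_O')$ with Choi operators $M_x,M_y$, the operator $\mathrm{tr}_{A_IA_OB_IB_O}\big(W^{T_{A_IA_OB_IB_O}}(M_x\otimes M_y)\big)$ is the Choi operator of a CPTP map from $PA_I'B_I'$ to $FA_O'B_O'$. It is pure if for all ancilla spaces with $d_{A_I}d_{A_I'}=d_{A_O}d_{A_O'}$, $d_{B_I}d_{B_I'}=d_{B_O}d_{B_O'}$, $d_Pd_{A_I'}d_{B_I'}=d_Fd_{A_O'}d_{B_O'}$ and all unitaries $U:A_IA_I'\to A_OA_O'$, $V:B_IB_I'\to B_OB_O'$,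 the operator $\mathrm{tr}_{A_IA_OB_IB_O}\big(W^{T_{A_IA_OB_IB_O}}(|U\rangle\!\rangle\langle\!\langle U|\otimes|V\rangle\!\rangle\langle\!\langle V|)\big)$ is the Choi operator of a unitary channel. The induced map of $W=|w\rangle\langle w|$ sends linear $U:A_I\to A_O$, $V:B_I\to B_O$ to $\mathcal{G}(U,V):P\to F$ defined by $|\mathcal{G}(U,V)\rangle\!\rangle^{PF}=|w\rangle^{T_{A_IA_OB_IB_O}}(|U\rangle\!\rangle^{A_IA_O}\otimes|V\rangle\!\rangle^{B_IB_O})$. A frame function for Alice is a pair $(\Pi_A,\Phi_A)$ of functions sending linear maps $T_B:B_I\to B_O$ to linear maps $\Pi_A(T_B):P\to A_I\otimes E_A$, $\Phi_A(T_B):A_O\otimes E_A\to F$ which are unitary whenever $T_B$ is unitary (no linearity required); a frame function for Bob is defined symmetrically with $\Pi_B(T_A):P\to B_I\otimes E_B$, $\Phi_B(T_A):B_O\otimes E_B\to F$ for linear $T_A:A_I\to A_O$. *)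

From mathcomp Require Import all_boot all_order all_algebra.
From mathcomp Require Import complex mxtens.
From mathcomp Require Import reals.

Set Implicit Arguments.
Unset Strict Implicit.
Unset Printing Implicit Defensive.

Import GRing.Theory Num.Theory.
Local Open Scope ring_scope.

(* Conventions: a Hilbert space of dimension d has computational basis 'I_d;
   a linear map K : X -> Y (dims dX, dY) is a matrix 'M_(dY, dX) acting on
   column vectors; the tensor product X (x) Y has dimension dX * dY with basis
   index mxtens_index (x, y) (first factor most significant), and A *t B is the
   Kronecker product. *)

Section Defs.
Variable C : numClosedFieldType.

Definition adj m n (A : 'M[C]_(m, n)) : 'M[C]_(n, m) := (map_mx Num.conj A)^T.

(* unitary (possibly between spaces given with different index sizes;
   both identities are required, which forces equal dimensions) *)
Definition unitary_mx m n (A : 'M[C]_(m, n)) : Prop :=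
  adj A *m A = 1%:M /\ A *m adj A = 1%:M.

Definition psd n (A : 'M[C]_n) : Prop :=
  forall x : 'cV[C]_n, 0 <= (adj x *m A *m x) 0 0.

Definition is_linear_map n m (f : 'M[C]_n -> 'M[C]_m) : Prop :=
  forall (a : C) (X Y : 'M[C]_n), f (a *: X + Y) = a *: f X + f Y.

(* block (i,j) of an operator on X (x) K, as an operator on K *)
Definition mxblk n k (rho : 'M[C]_(n * k)) (i j : 'I_n) : 'M[C]_k :=
  \matrix_(a, b) rho (mxtens_index (i, a)) (mxtens_index (j, b)).

(* (f (x) id_K) rho for f linear *)
Definition ampl n m k (f : 'M[C]_n -> 'M[C]_m) (rho : 'M[C]_(n * k)) : 'M[C]_(m * k) :=
  \sum_(i < n) \sum_(j < n) (f (delta_mx i j) *t mxblk rho i j).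

Definition completely_positive n m (f : 'M[C]_n -> 'M[C]_m) : Prop :=
  forall (k : nat) (rho : 'M[C]_(n * k)), psd rho -> psd (ampl f rho).

Definition trace_preserving n m (f : 'M[C]_n -> 'M[C]_m) : Prop :=
  forall X : 'M[C]_n, \tr (f X) = \tr X.

Definition choi n m (f : 'M[C]_n -> 'M[C]_m) : 'M[C]_(n * m) :=
  \sum_(i < n) \sum_(j < n) (delta_mx i j *t f (delta_mx i j)).

Definition is_cptp_choi n m (J : 'M[C]_(n * m)) : Prop :=
  exists f : 'M[C]_n -> 'M[C]_m,
    [/\ is_linear_map f, completely_positive f, trace_preserving f & J = choi f].

Definition is_unitary_choi n m (J : 'M[C]_(n * m)) : Prop :=
  exists X : 'M[C]_(m, n),
    unitary_mx X /\ J = choi (fun rho : 'M[C]_n => X *m rho *m adj X).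

(* |K>> = sum_i |i> (x) K|i>  for K : X -> Y *)
Definition vecK m n (K : 'M[C]_(m, n)) : 'cV[C]_(n * m) :=
  \matrix_(k, _) K (mxtens_unindex k).2 (mxtens_unindex k).1.

Definition ix2 a b (i1 : 'I_a) (i2 : 'I_b) : 'I_(a * b) := mxtens_index (i1, i2).
Definition ix3 a b c (i1 : 'I_a) (i2 : 'I_b) (i3 : 'I_c) : 'I_(a * b * c) :=
  ix2 (ix2 i1 i2) i3.
Definition ix6 a b c d e g (i1 : 'I_a) (i2 : 'I_b) (i3 : 'I_c) (i4 : 'I_d)
  (i5 : 'I_e) (i6 : 'I_g) : 'I_(a * b * c * d * e * g) :=
  ix2 (ix2 (ix2 (ix3 i1 i2 i3) i4) i5) i6.

Definition ux2 a b (k : 'I_(a * b)) : 'I_a * 'I_b := mxtens_unindex k.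
Definition ux3 a b c (k : 'I_(a * b * c)) : 'I_a * 'I_b * 'I_c :=
  ((ux2 (ux2 k).1).1, (ux2 (ux2 k).1).2, (ux2 k).2).

Section Process.
Variables dP dF dAI dAO dBI dBO : nat.
Local Notation dS := (dP * dF * dAI * dAO * dBI * dBO).

Definition proj_of (w : 'cV[C]_dS) : 'M[C]_dS := w *m adj w.

(* tr_{AI AO BI BO}( W^{T_{AI AO BI BO}} (Mx (x) My) ), an operator on
   P F AI' AO' BI' BO', written as an operator on (P AI' BI') (x) (F AO' BO'),
   where Mx acts on AI AI' AO AO' and My on BI BI' BO BO'. *)
Definition link nI nO mI mO (W : 'M[C]_dS)
  (Mx : 'M[C]_(dAI * nI * (dAO * nO))) (My : 'M[C]_(dBI * mI * (dBO * mO)))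
  : 'M[C]_(dP * nI * mI * (dF * nO * mO)) :=
  \matrix_(r, c)
   (let: (p, ai', bi') := ux3 (ux2 r).1 in
    let: (f, ao', bo') := ux3 (ux2 r).2 in
    let: (p2, ai2', bi2') := ux3 (ux2 c).1 in
    let: (f2, ao2', bo2') := ux3 (ux2 c).2 in
    \sum_(ai < dAI) \sum_(ao < dAO) \sum_(bi < dBI) \sum_(bo < dBO)
    \sum_(ai2 < dAI) \sum_(ao2 < dAO) \sum_(bi2 < dBI) \sum_(bo2 < dBO)
      W (ix6 p f ai ao bi bo) (ix6 p2 f2 ai2 ao2 bi2 bo2)
      * Mx (ix2 (ix2 ai ai') (ix2 ao ao')) (ix2 (ix2 ai2 ai2') (ix2 ao2 ao2'))
      * My (ix2 (ix2 bi bi') (ix2 bo bo')) (ix2 (ix2 bi2 bi2') (ix2 bo2 bo2'))).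

Definition is_process (W : 'M[C]_dS) : Prop :=
  forall (nI nO mI mO : nat), (0 < nI)%N -> (0 < nO)%N -> (0 < mI)%N -> (0 < mO)%N ->
  forall (Mx : 'M[C]_(dAI * nI * (dAO * nO))) (My : 'M[C]_(dBI * mI * (dBO * mO))),
    is_cptp_choi Mx -> is_cptp_choi My ->
    is_cptp_choi (link W Mx My).

Definition is_pure (W : 'M[C]_dS) : Prop :=
  forall (nI nO mI mO : nat), (0 < nI)%N -> (0 < nO)%N -> (0 < mI)%N -> (0 < mO)%N ->
    (dAI * nI = dAO * nO)%N -> (dBI * mI = dBO * mO)%N ->
    (dP * nI * mI = dF * nO * mO)%N ->
  forall (U : 'M[C]_(dAO * nO, dAI * nI)) (V : 'M[C]_(dBO * mO, dBI * mI)),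
    unitary_mx U -> unitary_mx V ->
    is_unitary_choi (link W (vecK U *m adj (vecK U)) (vecK V *m adj (vecK V))).

Definition is_pure_process (W : 'M[C]_dS) : Prop := is_process W /\ is_pure W.

(* induced map: |G(U,V)>>^{PF} = |w>^{T_{AI AO BI BO}} (|U>> (x) |V>>) *)
Definition induced_map (w : 'cV[C]_dS) (U : 'M[C]_(dAO, dAI)) (V : 'M[C]_(dBO, dBI))
  : 'M[C]_(dF, dP) :=
  \matrix_(f, p)
    \sum_(ai < dAI) \sum_(ao < dAO) \sum_(bi < dBI) \sum_(bo < dBO)
      w (ix6 p f ai ao bi bo) 0 * U ao ai * V bo bi.

Definition frame_function_A dEA
  (Pi : 'M[C]_(dBO, dBI) -> 'M[C]_(dAI * dEA, dP))
  (Phi : 'M[C]_(dBO, dBI) -> 'M[C]_(dF, dAO * dEA)) : Prop :=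
  forall T : 'M[C]_(dBO, dBI), unitary_mx T -> unitary_mx (Pi T) /\ unitary_mx (Phi T).

Definition frame_function_B dEB
  (Pi : 'M[C]_(dAO, dAI) -> 'M[C]_(dBI * dEB, dP))
  (Phi : 'M[C]_(dAO, dAI) -> 'M[C]_(dF, dBO * dEB)) : Prop :=
  forall T : 'M[C]_(dAO, dAI), unitary_mx T -> unitary_mx (Pi T) /\ unitary_mx (Phi T).

End Process.
End Defs.

(* Fix Bob's unitary U_B and let L := G(., U_B).  Feeding purity with unitary instruments
   carrying a qubit ancilla shows that L (x) id_2 maps unitaries to unitaries: the link
   product is the rank-one operator of the induced map with ancillas, and a rank-one Choi
   operator of a unitary channel determines that map up to a phase.  For such a linear L,
   V0 := L 1 is unitary and rho := V0^* L is a unital *-homomorphism: applying L (x) id_2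
   to the unitary [[a, bV], [bW, -aWV]] (a^2 + b^2 = 1) gives rho (W V) = rho W rho V for
   unitaries, and unitaries span all matrices.  The rho E_ij form a system of matrix units,
   and an isometry onto the range of rho E_00 assembles into a unitary S with
   rho X = S (X (x) 1) S^*.  Hence G(U_A, U_B) = (V0 S) (U_A (x) 1) S^*, a frame function
   for Alice; Bob's is obtained symmetrically. *)

From HB Require Import structures.
From mathcomp Require Import all_boot all_order all_algebra fingroup perm.
From mathcomp Require Import complex mxtens reals spectral ring.
From Stdlib Require Import Classical IndefiniteDescription.

Set Implicit Arguments.
Unset Strict Implicit.
Unset Printing Implicit Defensive.

Import GRing.Theory Num.Theory.
Local Open Scope ring_scope.

Section Adjoint.
Variable C : numClosedFieldType.

Lemma adjE m n (A : 'M[C]_(m, n)) i j : adj A i j = (A j i)^*.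
Proof. by rewrite !mxE. Qed.

Lemma adjK m n (A : 'M[C]_(m, n)) : adj (adj A) = A.
Proof. by apply/matrixP => i j; rewrite !adjE conjCK. Qed.

Lemma adjM m n p (A : 'M[C]_(m, n)) (B : 'M[C]_(n, p)) :
  adj (A *m B) = adj B *m adj A.
Proof. by rewrite /adj map_mxM trmx_mul. Qed.

Lemma adjD m n (A B : 'M[C]_(m, n)) : adj (A + B) = adj A + adj B.
Proof. by rewrite /adj map_mxD linearD. Qed.

Lemma adjZ m n (c : C) (A : 'M[C]_(m, n)) : adj (c *: A) = c^* *: adj A.
Proof. by apply/matrixP => i j; rewrite !mxE rmorphM. Qed.

Lemma adjB m n (A B : 'M[C]_(m, n)) : adj (A - B) = adj A - adj B.
Proof. by rewrite /adj map_mxB linearB. Qed.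

Lemma adj1 n : adj (1%:M : 'M[C]_n) = 1%:M.
Proof. by rewrite /adj map_mx1 trmx1. Qed.

Lemma adj_tens m n p q (A : 'M[C]_(m, n)) (B : 'M[C]_(p, q)) :
  adj (A *t B) = adj A *t adj B.
Proof. by apply/matrixP => i j; rewrite !mxE rmorphM. Qed.

Lemma tens11 m n : (1%:M : 'M[C]_m) *t (1%:M : 'M[C]_n) = 1%:M.
Proof.
apply/matrixP => r c.
case: (mxtens_indexP r) => i a; case: (mxtens_indexP c) => j b.
rewrite tensmxE !mxE -natrM (inj_eq (can_inj (@mxtens_indexK m n))).
by rewrite xpair_eqE mulnb.
Qed.

Lemma unitary_mxM m n p (A : 'M[C]_(m, n)) (B : 'M[C]_(n, p)) :
  unitary_mx A -> unitary_mx B -> unitary_mx (A *m B).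
Proof.
move=> [A1 A2] [B1 B2]; rewrite /unitary_mx !adjM.
by rewrite !mulmxA -(mulmxA (adj B)) A1 mulmx1 B1 -(mulmxA A) B2 mulmx1 A2.
Qed.

Lemma unitary_mx_adj m n (A : 'M[C]_(m, n)) : unitary_mx A -> unitary_mx (adj A).
Proof. by move=> [A1 A2]; split; rewrite adjK. Qed.

Lemma unitary_mx_tens m n p q (A : 'M[C]_(m, n)) (B : 'M[C]_(p, q)) :
  unitary_mx A -> unitary_mx B -> unitary_mx (A *t B).
Proof.
by move=> [A1 A2] [B1 B2]; split; rewrite adj_tens tensmx_mul ?A1 ?B1 ?A2 ?B2 tens11.
Qed.

Lemma unitary_mx1 n : unitary_mx (1%:M : 'M[C]_n).
Proof. by split; rewrite adj1 mulmx1. Qed.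

Lemma unitary_mxZ n (c : C) (A : 'M[C]_n) :
  c * c^* = 1 -> unitary_mx A -> unitary_mx (c *: A).
Proof.
move=> c1 [A1 A2]; split; rewrite adjZ -scalemxAl -scalemxAr scalerA ?A1 ?A2.
  by rewrite mulrC c1 scale1r.
by rewrite c1 scale1r.
Qed.

Lemma unitary_mx_dim m n (A : 'M[C]_(m, n)) : unitary_mx A -> m = n.
Proof.
move=> [A1 A2].
have := leq_trans (mxrankM_maxl A (adj A)) (rank_leq_col A).
have := leq_trans (mxrankM_maxl (adj A) A) (rank_leq_col (adj A)).
by rewrite A1 A2 !mxrank1 => nm mn; apply/eqP; rewrite eqn_leq mn nm.
Qed.

Lemma unitary_mx_of_tens1 d n (A : 'M[C]_d) :
  (0 < n)%N -> unitary_mx (A *t (1%:M : 'M_n)) -> unitary_mx A.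
Proof.
move=> n0 [U1 U2].
have tens1_inj (B : 'M[C]_d) : B *t (1%:M : 'M_n) = 1%:M -> B = 1%:M.
  move=> /matrixP eB; apply/matrixP => i j.
  move: (eB (mxtens_index (i, Ordinal n0)) (mxtens_index (j, Ordinal n0))).
  by rewrite tensmxE -(tens11 d n) tensmxE !mxE eqxx !mulr1.
by split; apply: tens1_inj; [rewrite -U1 | rewrite -U2];
  rewrite adj_tens tensmx_mul adj1 mulmx1.
Qed.

Lemma unitary_mx_reindex N M (Y : 'M[C]_N) (Z : 'M[C]_M) (s : 'I_M -> 'I_N) :
  bijective s -> (forall i j, Z i j = Y (s i) (s j)) ->
  unitary_mx Y -> unitary_mx Z.
Proof.
move=> bij_s eZ [Y1 Y2]; have s_inj := bij_inj bij_s.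
have onto_s : {on predT, bijective s} by case: bij_s => g sg gs; exists g.
split; apply/matrixP => i j.
  move/matrixP: Y1 => /(_ (s i) (s j)); rewrite !mxE (inj_eq s_inj) => <-.
  by rewrite (reindex s) //=; apply: eq_bigr => k _; rewrite !adjE !eZ.
move/matrixP: Y2 => /(_ (s i) (s j)); rewrite !mxE (inj_eq s_inj) => <-.
by rewrite (reindex s) //=; apply: eq_bigr => k _; rewrite !adjE !eZ.
Qed.

End Adjoint.

Section Blocks.
Variable C : numClosedFieldType.

Lemma sum_mxtens_index (V : nmodType) a b (G : 'I_(a * b) -> V) :
  \sum_k G k = \sum_i \sum_j G (mxtens_index (i, j)).
Proof.
rewrite pair_big (reindex (@mxtens_index a b)) /=; first by apply: eq_bigr => -[].
by exists (@mxtens_unindex a b) => k _; rewrite (mxtens_indexK, mxtens_unindexK).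
Qed.

Definition blk d n (F : 'I_n -> 'I_n -> 'M[C]_d) : 'M[C]_(d * n) :=
  \matrix_(r, c) F (mxtens_unindex r).2 (mxtens_unindex c).2
                   (mxtens_unindex r).1 (mxtens_unindex c).1.

Lemma blkE d n (F : 'I_n -> 'I_n -> 'M[C]_d) i x j y :
  blk F (mxtens_index (i, x)) (mxtens_index (j, y)) = F x y i j.
Proof. by rewrite mxE !mxtens_indexK. Qed.

Lemma blk_eqP d n (F G : 'I_n -> 'I_n -> 'M[C]_d) :
  blk F = blk G <-> forall x y, F x y = G x y.
Proof.
split=> [/matrixP eFG x y | eFG]; last by apply/matrixP => r c; rewrite !mxE eFG.
by apply/matrixP => i j; have := eFG (mxtens_index (i, x)) (mxtens_index (j, y));
  rewrite !blkE.
Qed.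

Lemma blk_mul d n (F G : 'I_n -> 'I_n -> 'M[C]_d) :
  blk F *m blk G = blk (fun x y => \sum_z F x z *m G z y).
Proof.
apply/matrixP => r c.
case: (mxtens_indexP r) => i x; case: (mxtens_indexP c) => j y.
rewrite blkE !mxE sum_mxtens_index summxE exchange_big /=; apply: eq_bigr => z _.
by rewrite mxE; apply: eq_bigr => k _; rewrite !blkE.
Qed.

Lemma blk_adj d n (F : 'I_n -> 'I_n -> 'M[C]_d) :
  adj (blk F) = blk (fun x y => adj (F y x)).
Proof.
apply/matrixP => r c.
case: (mxtens_indexP r) => i x; case: (mxtens_indexP c) => j y.
by rewrite adjE !blkE adjE.
Qed.

Lemma blk_diag d n (A : 'M[C]_d) :
  blk (fun x y => (x == y)%:R *: A) = A *t (1%:M : 'M_n).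
Proof.
apply/matrixP => r c.
case: (mxtens_indexP r) => i x; case: (mxtens_indexP c) => j y.
by rewrite blkE tensmxE !mxE mulrC.
Qed.

Lemma unitary_blkP d n (F : 'I_n -> 'I_n -> 'M[C]_d) :
  unitary_mx (blk F) <->
  (forall x y, \sum_z adj (F z x) *m F z y = (x == y)%:R *: 1%:M) /\
  (forall x y, \sum_z F x z *m adj (F y z) = (x == y)%:R *: 1%:M).
Proof.
by rewrite /unitary_mx -tens11 -blk_diag blk_adj !blk_mul !blk_eqP.
Qed.

Section Ampliation.
Variables (n m : nat) (L : {linear 'M[C]_n -> 'M[C]_m}).

Lemma amplE k (U : 'M[C]_(n * k)) :
  ampl L U =
  blk (fun x y => L (\matrix_(i, j) U (mxtens_index (i, x)) (mxtens_index (j, y)))).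
Proof.
apply/matrixP => r c.
case: (mxtens_indexP r) => p x; case: (mxtens_indexP c) => q y.
rewrite blkE; set M := \matrix_(i, j) _; rewrite [M]matrix_sum_delta linear_sum !summxE.
apply: eq_bigr => i _; rewrite linear_sum !summxE; apply: eq_bigr => j _.
by rewrite linearZ tensmxE !mxE mulrC.
Qed.

Lemma ampl_blk k (F : 'I_k -> 'I_k -> 'M[C]_n) :
  ampl L (blk F) = blk (fun x y => L (F x y)).
Proof.
rewrite amplE; apply/blk_eqP => x y; congr (L _).
by apply/matrixP => i j; rewrite mxE blkE.
Qed.

End Ampliation.

Lemma ord2P (x : 'I_2) : x = ord0 \/ x = ord_max.
Proof. by case: x => -[|[|]] // ?; [left | right]; apply: val_inj. Qed.

Lemma big_ord2 (V : nmodType) (G : 'I_2 -> V) : \sum_z G z = G ord0 + G ord_max.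
Proof. by rewrite big_ord_recl big_ord1; congr (_ + G _); apply: val_inj. Qed.

Definition mx2 d (A00 A01 A10 A11 : 'M[C]_d) : 'I_2 -> 'I_2 -> 'M[C]_d :=
  fun x y => if x == ord0 then (if y == ord0 then A00 else A01)
             else (if y == ord0 then A10 else A11).

Lemma unitary_blk2_orthogonal d (A00 A01 A10 A11 : 'M[C]_d) :
  unitary_mx (blk (mx2 A00 A01 A10 A11)) -> adj A00 *m A01 + adj A10 *m A11 = 0.
Proof. by case/unitary_blkP => /(_ ord0 ord_max) + _; rewrite big_ord2 scale0r. Qed.

Lemma unitary_blk2_rotation d (a b : C) (V W : 'M[C]_d) :
  a^* = a -> b^* = b -> a * a + b * b = 1 -> unitary_mx V -> unitary_mx W ->
  unitary_mx (blk (mx2 (a *: 1%:M) (b *: V) (b *: W) (- a *: (W *m V)))).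
Proof.
move=> ra rb ab hV hW; have [WV1 WV2] := unitary_mxM hW hV.
have [[V1 V2] [W1 W2]] := (hV, hW).
have rna : (- a)^* = - a by rewrite rmorphN /= ra.
have eWV : adj W *m (W *m V) = V by rewrite mulmxA W1 mul1mx.
have eVWV : V *m adj (W *m V) = adj W by rewrite adjM mulmxA V2 mul1mx.
have eWVW : adj (W *m V) *m W = adj V by rewrite adjM -mulmxA W1 mulmx1.
have eWVV : W *m V *m adj V = W by rewrite -mulmxA V2 mulmx1.
apply/unitary_blkP; split => x y; rewrite big_ord2;
  case: (ord2P x) => ->; case: (ord2P y) => ->;
  rewrite /mx2 /= !adjZ ?adj1 ?rna ?ra ?rb;
  rewrite -!scalemxAl -!scalemxAr !scalerA ?mulmx1 ?mul1mx;
  rewrite ?V1 ?V2 ?W1 ?W2 ?WV1 ?WV2 ?eWV ?eVWV ?eWVW ?eWVV -?scalerDl;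
  by rewrite ?mulrNN ?mulrN ?mulNr ?(mulrC b a) ?subrr ?scale0r ?(addrC (b * b)) ?ab.
Qed.

End Blocks.

Section UnitarySpan.
Variables (C : numClosedFieldType) (d : nat).

Lemma adj_delta_mx (i j : 'I_d) : adj (delta_mx i j : 'M[C]_d) = delta_mx j i.
Proof. by rewrite /adj map_delta_mx trmx_delta. Qed.

Lemma unitary_mx_perm (s : 'S_d) : unitary_mx (perm_mx s : 'M[C]_d).
Proof.
have adj_perm : adj (perm_mx s : 'M[C]_d) = perm_mx s^-1.
  by rewrite /adj map_perm_mx tr_perm_mx.
by split; rewrite adj_perm -perm_mxM ?mulVg ?mulgV perm_mx1.
Qed.

Lemma unitary_mx_reflection (j : 'I_d) :
  unitary_mx (1%:M - 2%:R *: delta_mx j j : 'M[C]_d).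
Proof.
set E := delta_mx j j; have EE : E *m E = E by rewrite mul_delta_mx.
have adjR : adj (1%:M - 2%:R *: E) = 1%:M - 2%:R *: E.
  by rewrite adjB adj1 adjZ adj_delta_mx rmorph_nat.
have RR : (1%:M - 2%:R *: E) *m (1%:M - 2%:R *: E) = 1%:M.
  rewrite mulmxBl !mulmxBr !mul1mx !mulmx1 -scalemxAl -scalemxAr scalerA EE.
  have two : 2%:R - 2%:R * 2%:R = - 2%:R :> C by ring.
  by rewrite -scalerBl two scaleNr opprK subrK.
by split; rewrite adjR.
Qed.

(* [E_ij = (T - T R) / 2], with [T] the transposition [(i j)] and [R] the reflection
   in [e_j]. *)
Lemma delta_mx_unitary_diff (i j : 'I_d) : exists U1 U2 : 'M[C]_d,
  [/\ unitary_mx U1, unitary_mx U2 & delta_mx i j = 2%:R^-1 *: (U1 - U2)].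
Proof.
pose T : 'M[C]_d := perm_mx (tperm i j).
pose R : 'M[C]_d := 1%:M - 2%:R *: delta_mx j j.
have TE : T *m delta_mx j j = delta_mx i j.
  apply/matrixP => a b; rewrite /T -row_permE !mxE.
  by rewrite (canF_eq (tpermK i j)) tpermR.
exists T, (T *m R); split; first exact: unitary_mx_perm.
  exact: unitary_mxM (unitary_mx_perm _) (unitary_mx_reflection j).
rewrite /R mulmxBr mulmx1 -scalemxAr TE opprB addrC subrK scalerA.
by rewrite mulVf ?scale1r ?pnatr_eq0.
Qed.

Lemma unitary_span_ind (P : 'M[C]_d -> Prop) :
  (forall U, unitary_mx U -> P U) ->
  (forall a X Y, P X -> P Y -> P (a *: X + Y)) ->
  forall X, P X.
Proof.
move=> PU PC.
have P0 : P 0.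
  have P1 := PU _ (unitary_mx1 C d).
  by have := PC (-1) _ _ P1 P1; rewrite scaleN1r addNr.
have PZ a X : P X -> P (a *: X) by move=> PX; rewrite -[a *: X]addr0; exact: PC.
have PD X Y : P X -> P Y -> P (X + Y) by move=> PX PY; rewrite -[X]scale1r; exact: PC.
have Pdelta i j : P (delta_mx i j).
  have [U1 [U2 [hU1 hU2 ->]]] := delta_mx_unitary_diff i j.
  by apply/PZ/PD; [exact: PU | rewrite -scaleN1r; exact/PZ/PU].
move=> X; rewrite [X]matrix_sum_delta.
by elim/big_ind: _ => // i _; elim/big_ind: _ => // j _; exact: PZ.
Qed.

End UnitarySpan.

Section MatrixUnits.
Variable C : numClosedFieldType.

Lemma projector_isometry m (P : 'M[C]_m) : adj P = P -> P *m P = P ->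
  exists S : 'M[C]_(\rank P, m), S *m adj S = 1%:M /\ adj S *m S = P.
Proof.
move=> hP PP.
have hS : (schmidt (row_base P) :=: P)%MS.
  exact: eqmx_trans (eqmx_schmidt_free (row_base_free P)) (eq_row_base P).
set S := schmidt (row_base P).
have SS : S *m adj S = 1%:M.
  have /unitarymxP := schmidt_unitarymx (row_base P) (rank_leq_col P).
  by rewrite -/S => <-; congr (_ *m _); apply/matrixP => i j; rewrite !mxE.
have /submxP [D1 eD1] : (P <= S)%MS by rewrite hS.
have /submxP [D2 eD2] : (S <= P)%MS by rewrite hS.
have SP : S *m P = S by rewrite eD2 -mulmxA PP.
have SSP : adj S *m S *m P = P.
  have PD : adj S *m adj D1 = P by rewrite -adjM -eD1 hP.
  by rewrite -[X in _ *m X = _]PD !mulmxA -(mulmxA _ S) SS mulmx1.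
have aS : adj S = P *m adj S by rewrite -[X in adj X = _]SP adjM hP.
have := congr1 (@adj C _ _) SSP; rewrite !adjM adjK hP => PSS.
by exists S; split; rewrite // aS -mulmxA PSS.
Qed.

Definition row_blk d m k (A : 'I_d -> 'M[C]_(m, k)) : 'M[C]_(m, d * k) :=
  \matrix_(r, c) A (mxtens_unindex c).1 r (mxtens_unindex c).2.

Lemma row_blkE d m k (A : 'I_d -> 'M[C]_(m, k)) r i a :
  row_blk A r (mxtens_index (i, a)) = A i r a.
Proof. by rewrite mxE mxtens_indexK. Qed.

Lemma row_blk_mul_adj d m k (A B : 'I_d -> 'M[C]_(m, k)) :
  row_blk A *m adj (row_blk B) = \sum_i A i *m adj (B i).
Proof.
apply/matrixP => r c; rewrite !mxE sum_mxtens_index summxE; apply: eq_bigr => i _.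
by rewrite mxE; apply: eq_bigr => a _; rewrite !adjE !row_blkE.
Qed.

Lemma adj_rstk_mul1 d m k (A B : 'I_d -> 'M[C]_(m, k)) :
  (forall i j, adj (A i) *m B j = (i == j)%:R *: 1%:M) ->
  adj (row_blk A) *m row_blk B = 1%:M.
Proof.
move=> AB; apply/matrixP => r c; rewrite -tens11.
case: (mxtens_indexP r) => i a; case: (mxtens_indexP c) => j b.
have /matrixP/(_ a b) := AB i j; rewrite tensmxE !mxE => <-.
by apply: eq_bigr => q _; rewrite !adjE !row_blkE.
Qed.

Lemma row_blk_mul_tens1 d m k (A : 'I_d -> 'M[C]_(m, k)) (X : 'M[C]_d) :
  row_blk A *m (X *t (1%:M : 'M_k)) = row_blk (fun j => \sum_i X i j *: A i).
Proof.
apply/matrixP => r c; case: (mxtens_indexP c) => j b.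
rewrite row_blkE !mxE sum_mxtens_index summxE; apply: eq_bigr => i _.
rewrite (bigD1 b) //= big1 ?addr0.
  by rewrite row_blkE tensmxE !mxE eqxx mulr1n mulr1 mulrC.
by move=> a ab; rewrite row_blkE tensmxE !mxE (negbTE ab) mulr0n !mulr0.
Qed.

Variables (d m : nat) (e : 'I_d -> 'I_d -> 'M[C]_m).
Hypothesis e_mul : forall i j k l, e i j *m e k l = e i l *+ (j == k).
Hypothesis e_adj : forall i j, adj (e i j) = e j i.
Hypothesis e_sum : \sum_i e i i = 1%:M.

Lemma matrix_units_tens1 : (0 < d)%N ->
  exists k (S : 'M[C]_(m, d * k)), [/\ m = (d * k)%N, unitary_mx S &
    forall X : 'M[C]_d, \sum_i \sum_j X i j *: e i j = S *m (X *t 1%:M) *m adj S].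
Proof.
move=> d_gt0; pose o := Ordinal d_gt0.
have eoo : e o o *m e o o = e o o by rewrite e_mul eqxx.
have [S0 [S0S0 S0P]] := projector_isometry (e_adj o o) eoo.
set k := \rank (e o o) in S0 S0S0 S0P.
have S0e : S0 *m e o o = S0 by rewrite -S0P mulmxA S0S0 mul1mx.
pose A i := e i o *m adj S0.
have AA i j : A i *m adj (A j) = e i j.
  by rewrite adjM adjK e_adj mulmxA -(mulmxA _ _ S0) S0P !e_mul !eqxx.
have adjAA i j : adj (A i) *m A j = (i == j)%:R *: 1%:M.
  rewrite adjM adjK e_adj mulmxA -(mulmxA S0) e_mul -scaler_nat -scalemxAr.
  by rewrite -scalemxAl S0e S0S0 eq_sym.
have S_unitary : unitary_mx (row_blk A).
  by split; [exact: adj_rstk_mul1 | rewrite row_blk_mul_adj -e_sum; apply: eq_bigr].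
exists k, (row_blk A); split => // [|X]; first exact: unitary_mx_dim S_unitary.
rewrite row_blk_mul_tens1 row_blk_mul_adj exchange_big; apply: eq_bigr => i _.
by rewrite mulmx_suml; apply: eq_bigr => j _; rewrite -scalemxAl AA.
Qed.

End MatrixUnits.

Section UnitaryPreserving2.
Variable C : numClosedFieldType.

Definition unitary_preserving2 d m (L : 'M[C]_d -> 'M[C]_m) : Prop :=
  forall U : 'M[C]_(d * 2), unitary_mx U -> unitary_mx (ampl L U).

Variables (d m : nat) (L : {linear 'M[C]_d -> 'M[C]_m}).
Hypothesis L2 : unitary_preserving2 L.

Lemma unitary_preserving2_unitary U : unitary_mx U -> unitary_mx (L U).
Proof.
move=> hU; apply: (@unitary_mx_of_tens1 _ _ 2) => //; rewrite -blk_diag.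
have := L2 (unitary_mx_tens hU (unitary_mx1 C 2)); rewrite -blk_diag ampl_blk.
suff -> : blk (fun x y : 'I_2 => L ((x == y)%:R *: U)) =
          blk (fun x y => (x == y)%:R *: L U) by [].
by apply/blk_eqP => x y; rewrite linearZ.
Qed.

(* [3/5, 4/5] is a rational point of the unit circle with nonzero coordinates. *)
Lemma unitary_preserving2_adj_mul V W : unitary_mx V -> unitary_mx W ->
  adj (L W) *m L (W *m V) = adj (L 1%:M) *m L V.
Proof.
move=> hV hW; pose a : C := 3%:R / 5%:R; pose b : C := 4%:R / 5%:R.
have ra : a^* = a by rewrite fmorph_div !rmorph_nat.
have rb : b^* = b by rewrite fmorph_div !rmorph_nat.
have ab : a * a + b * b = 1 by rewrite /a /b; field.
have ab0 : a * b != 0 by rewrite !mulf_neq0 ?invr_eq0 ?pnatr_eq0.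
have := L2 (unitary_blk2_rotation ra rb ab hV hW); rewrite ampl_blk.
have -> : blk (fun x y => L (mx2 (a *: 1%:M) (b *: V) (b *: W) (- a *: (W *m V)) x y)) =
  blk (mx2 (L (a *: 1%:M)) (L (b *: V)) (L (b *: W)) (L (- a *: (W *m V)))).
  by apply/blk_eqP => x y; case: (ord2P x) => ->; case: (ord2P y) => ->.
move/unitary_blk2_orthogonal; rewrite !linearZ /= !adjZ ra rb.
rewrite -!scalemxAl !scalerA mulNr (mulrC b a) scaleNr => /eqP.
by rewrite -scalerBr scaler_eq0 (negbTE ab0) subr_eq0 => /eqP ->.
Qed.

Let rho X := adj (L 1%:M) *m L X.

Lemma rhoP a X Y : rho (a *: X + Y) = a *: rho X + rho Y.
Proof. by rewrite /rho linearP mulmxDr scalemxAr. Qed.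

Lemma rho1 : rho 1%:M = 1%:M.
Proof. by have [] := unitary_preserving2_unitary (unitary_mx1 C d). Qed.

Lemma rho_unitary U : unitary_mx U -> unitary_mx (rho U).
Proof.
move=> hU; apply: unitary_mxM; last exact: unitary_preserving2_unitary.
exact/unitary_mx_adj/unitary_preserving2_unitary/unitary_mx1.
Qed.

Lemma rho_unitaryM V W : unitary_mx V -> unitary_mx W -> rho (W *m V) = rho W *m rho V.
Proof.
move=> hV hW; have [_ LW] := unitary_preserving2_unitary hW.
by rewrite /rho -[L (W *m V)]mul1mx -LW -mulmxA unitary_preserving2_adj_mul // !mulmxA.
Qed.

Lemma rho_adj_unitary U : unitary_mx U -> rho (adj U) = adj (rho U).
Proof.
move=> hU; have [_ rU] := rho_unitary hU; have [U1 _] := hU.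
rewrite -[rho (adj U)]mulmx1 -rU mulmxA -rho_unitaryM ?U1 ?rho1 ?mul1mx //.
exact: unitary_mx_adj.
Qed.

Lemma rhoM X Y : rho (X *m Y) = rho X *m rho Y.
Proof.
have rhoMU W X' : unitary_mx W -> rho (X' *m W) = rho X' *m rho W.
  move=> hW; elim/(@unitary_span_ind C d): X' => [U hU | a X1 X2 e1 e2].
    exact: rho_unitaryM.
  by rewrite mulmxDl -scalemxAl !rhoP e1 e2 mulmxDl scalemxAl.
elim/(@unitary_span_ind C d): Y => [U hU | a Y1 Y2 e1 e2]; first exact: rhoMU.
by rewrite mulmxDr -scalemxAr !rhoP e1 e2 mulmxDr scalemxAr.
Qed.

Lemma rho_adj X : rho (adj X) = adj (rho X).
Proof.
elim/(@unitary_span_ind C d): X => [U hU | a X Y eX eY]; first exact: rho_adj_unitary.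
by rewrite adjD adjZ rhoP eX eY rhoP adjD adjZ.
Qed.

Lemma rho_expand X : L X = L 1%:M *m \sum_i \sum_j X i j *: rho (delta_mx i j).
Proof.
have [_ L1] := unitary_preserving2_unitary (unitary_mx1 C d).
rewrite -[L X]mul1mx -L1 -mulmxA -/(rho X); congr (_ *m _).
rewrite [X in rho X]matrix_sum_delta /rho linear_sum mulmx_sumr.
apply: eq_bigr => i _; rewrite linear_sum mulmx_sumr; apply: eq_bigr => j _.
by rewrite linearZ -scalemxAr.
Qed.

Lemma unitary_preserving2_factor : (0 < d)%N ->
  exists (Phi : 'M[C]_(m, d * (m %/ d))) (Pi : 'M[C]_(d * (m %/ d), m)),
    [/\ unitary_mx Phi, unitary_mx Pi & forall X, L X = Phi *m (X *t 1%:M) *m Pi].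
Proof.
move=> d_gt0; pose e i j := rho (delta_mx i j).
have e_mul i j k l : e i j *m e k l = e i l *+ (j == k).
  rewrite -rhoM mul_delta_mx_cond.
  by case: (j == k); rewrite ?mulr1n ?mulr0n // /rho linear0 mulmx0.
have e_adj i j : adj (e i j) = e j i by rewrite -rho_adj adj_delta_mx.
have e_sum : \sum_i e i i = 1%:M.
  by rewrite -rho1 mx1_sum_delta /rho linear_sum mulmx_sumr.
have [k [S [mk hS eS]]] := matrix_units_tens1 e_mul e_adj e_sum d_gt0.
have -> : (m %/ d)%N = k by rewrite mk mulKn.
have hL1 := unitary_preserving2_unitary (unitary_mx1 C d).
exists (L 1%:M *m S), (adj S); split; [exact: unitary_mxM | exact: unitary_mx_adj |].
by move=> X; rewrite rho_expand eS !mulmxA.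
Qed.

End UnitaryPreserving2.

Section Vectorization.
Variable C : numClosedFieldType.

Lemma outer_prod_eq N (g x : 'cV[C]_N) : g *m adj g = x *m adj x -> x != 0 ->
  exists2 c : C, c * c^* = 1 & g = c *: x.
Proof.
move=> e x0.
have [k xk] : exists k, x k 0 != 0.
  apply/existsP; apply: contraR x0 => /existsPn x0; apply/eqP/matrixP => i j.
  by rewrite (ord1 j) mxE; move/negPn/eqP: (x0 i).
have ek r : g r 0 * (g k 0)^* = x r 0 * (x k 0)^*.
  by move/matrixP: e => /(_ r k); rewrite !mxE !big_ord1 !adjE.
have gk : g k 0 != 0.
  by apply: contraNneq xk => gk0; move/eqP: (ek k); rewrite gk0 mul0r eq_sym mul_conjC_eq0.
exists ((x k 0)^* / (g k 0)^*).
  rewrite fmorph_div /= !conjCK mulrACA -invfM [(g k 0)^* * _]mulrC ek.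
  by rewrite [x k 0 * _]mulrC mulfV // mulf_neq0 // conjC_eq0.
apply/matrixP => r j; rewrite (ord1 j) mxE.
by rewrite mulrC mulrA -ek -mulrA divff ?mulr1 // conjC_eq0.
Qed.

Lemma vecK_neq0 m n (X : 'M[C]_(m, n)) : (0 < n)%N -> unitary_mx X -> vecK X != 0.
Proof.
move=> n0 [X1 _]; apply: contra_eq_neq X1 => X0.
have -> : X = 0.
  apply/matrixP => a b; move/matrixP: X0 => /(_ (mxtens_index (b, a)) ord0).
  by rewrite !mxE mxtens_indexK.
apply/eqP => /matrixP /(_ (Ordinal n0) (Ordinal n0)).
by rewrite mulmx0 !mxE eqxx => /eqP; rewrite eq_sym oner_eq0.
Qed.

Lemma choiE n m (f : 'M[C]_n -> 'M[C]_m) i a j b :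
  choi f (mxtens_index (i, a)) (mxtens_index (j, b)) = f (delta_mx i j) a b.
Proof.
rewrite /choi summxE (bigD1 i) //= summxE (bigD1 j) //= big1 ?addr0 => [|j' j'j].
  rewrite big1 ?addr0 => [|i' i'i]; last first.
    rewrite summxE big1 // => j' _.
    by rewrite tensmxE !mxE eq_sym (negbTE i'i) mulr0n mul0r.
  by rewrite tensmxE !mxE !eqxx /= mulr1n mul1r.
by rewrite tensmxE !mxE eqxx /= eq_sym (negbTE j'j) mulr0n mul0r.
Qed.

Lemma choi_conj_vecK n m (X : 'M[C]_(m, n)) :
  choi (fun rho : 'M[C]_n => X *m rho *m adj X) = vecK X *m adj (vecK X).
Proof.
apply/matrixP => r c.
case: (mxtens_indexP r) => i a; case: (mxtens_indexP c) => j b.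
rewrite choiE -(mul_delta_mx (0 : 'I_1)) mulmxA -colE -mulmxA -rowE.
by rewrite !mxE !big_ord1 !mxE !mxtens_indexK.
Qed.

End Vectorization.

Section AncillaInducedMap.
Variable C : numClosedFieldType.
Variables (dP dF dAI dAO dBI dBO nI nO mI mO : nat).
Local Notation dS := (dP * dF * dAI * dAO * dBI * dBO)%N.

Definition induced_map_anc (w : 'cV[C]_dS) (U : 'M[C]_(dAO * nO, dAI * nI))
    (V : 'M[C]_(dBO * mO, dBI * mI)) : 'M[C]_(dF * nO * mO, dP * nI * mI) :=
  \matrix_(r, c) (let: (f, ao', bo') := ux3 r in let: (p, ai', bi') := ux3 c in
    \sum_(ai < dAI) \sum_(ao < dAO) \sum_(bi < dBI) \sum_(bo < dBO)
      w (ix6 p f ai ao bi bo) 0 * U (ix2 ao ao') (ix2 ai ai')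
        * V (ix2 bo bo') (ix2 bi bi')).

Lemma link_vecK w U V :
  link (proj_of w) (vecK U *m adj (vecK U)) (vecK V *m adj (vecK V)) =
  vecK (induced_map_anc w U V) *m adj (vecK (induced_map_anc w U V)).
Proof.
have conj_sum4 (I1 I2 I3 I4 : finType) (F : I1 -> I2 -> I3 -> I4 -> C) :
    (\sum_i1 \sum_i2 \sum_i3 \sum_i4 F i1 i2 i3 i4)^* =
    \sum_i1 \sum_i2 \sum_i3 \sum_i4 (F i1 i2 i3 i4)^*.
  by rewrite !rmorph_sum; do 3!(apply: eq_bigr => ? _; rewrite rmorph_sum).
have mul_sum4 (I1 I2 I3 I4 J1 J2 J3 J4 : finType) (F : I1 -> I2 -> I3 -> I4 -> C)
    (G : J1 -> J2 -> J3 -> J4 -> C) :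
    (\sum_i1 \sum_i2 \sum_i3 \sum_i4 F i1 i2 i3 i4) *
      (\sum_j1 \sum_j2 \sum_j3 \sum_j4 G j1 j2 j3 j4) =
    \sum_i1 \sum_i2 \sum_i3 \sum_i4 \sum_j1 \sum_j2 \sum_j3 \sum_j4
      F i1 i2 i3 i4 * G j1 j2 j3 j4.
  rewrite mulr_suml; do 3!(apply: eq_bigr => ? _; rewrite mulr_suml).
  apply: eq_bigr => ? _; rewrite mulr_sumr; do 3!(apply: eq_bigr => ? _; rewrite mulr_sumr).
  by [].
apply/matrixP => r c; rewrite !mxE big_ord1 !mxE /ux3 /= conj_sum4 mul_sum4.
do 8!(apply: eq_bigr => ? _).
rewrite /proj_of !mxE !big_ord1 !mxE /ix2 !mxtens_indexK /= !rmorphM.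
ring.
Qed.

End AncillaInducedMap.

Section PureProcess.
Variable C : numClosedFieldType.
Variables (dP dA dB : nat) (w : 'cV[C]_(dP * dP * dA * dA * dB * dB)).
Hypotheses (w_pure : is_pure (proj_of w)) (dP_gt0 : (0 < dP)%N).

Lemma pure_induced_map_anc_unitary n k (U : 'M[C]_(dA * n)) (V : 'M[C]_(dB * k)) :
  (0 < n)%N -> (0 < k)%N -> unitary_mx U -> unitary_mx V ->
  unitary_mx (induced_map_anc w U V).
Proof.
move=> n_gt0 k_gt0 hU hV.
have [X [hX]] := w_pure n_gt0 n_gt0 k_gt0 k_gt0 erefl erefl erefl hU hV.
rewrite link_vecK choi_conj_vecK => eX.
have N_gt0 : (0 < dP * n * k)%N by rewrite !muln_gt0 dP_gt0 n_gt0 k_gt0.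
have [c c1 eG] := outer_prod_eq eX (vecK_neq0 N_gt0 hX).
suff -> : induced_map_anc w U V = c *: X by exact: unitary_mxZ.
apply/matrixP => a b; move/matrixP: eG => /(_ (mxtens_index (b, a)) 0).
by rewrite !mxE mxtens_indexK.
Qed.

Definition induced_mapl (V : 'M[C]_dB) (U : 'M[C]_dA) := induced_map w U V.
Definition induced_mapr (U : 'M[C]_dA) (V : 'M[C]_dB) := induced_map w U V.

Fact induced_mapl_linear V : linear (induced_mapl V).
Proof.
move=> a X Y; apply/matrixP => f p; rewrite /induced_mapl !mxE.
by do 4!(rewrite mulr_sumr -big_split /=; apply: eq_bigr => ? _); rewrite !mxE; ring.
Qed.

Fact induced_mapr_linear U : linear (induced_mapr U).
Proof.
move=> a X Y; apply/matrixP => f p; rewrite /induced_mapr !mxE.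
by do 4!(rewrite mulr_sumr -big_split /=; apply: eq_bigr => ? _); rewrite !mxE; ring.
Qed.

HB.instance Definition _ V :=
  GRing.isLinear.Build C _ _ _ (induced_mapl V) (induced_mapl_linear V).
HB.instance Definition _ U :=
  GRing.isLinear.Build C _ _ _ (induced_mapr U) (induced_mapr_linear U).

Lemma induced_mapl_unitary_preserving2 V : unitary_mx V ->
  unitary_preserving2 (induced_mapl V).
Proof.
move=> hV U hU.
have := pure_induced_map_anc_unitary (n := 2) (k := 1) isT isT hU
  (unitary_mx_tens hV (unitary_mx1 C 1)).
apply: (unitary_mx_reindex (s := fun r => mxtens_index (r, ord0))).
  exists (fun t => (mxtens_unindex t).1) => r; first by rewrite mxtens_indexK.
  by case: (mxtens_indexP r) => a z; rewrite mxtens_indexK (ord1 z).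
move=> r c; case: (mxtens_indexP r) => f x; case: (mxtens_indexP c) => p y.
rewrite amplE blkE !mxE /ux3 /ux2 /ix2 !mxtens_indexK /=.
by do 4!(apply: eq_bigr => ? _); rewrite tensmxE !mxE mulr1.
Qed.

Lemma induced_mapr_unitary_preserving2 U : unitary_mx U ->
  unitary_preserving2 (induced_mapr U).
Proof.
move=> hU V hV.
have := pure_induced_map_anc_unitary (n := 1) (k := 2) isT isT
  (unitary_mx_tens hU (unitary_mx1 C 1)) hV.
pose s (r : 'I_(dP * 2)) : 'I_(dP * 1 * 2) :=
  mxtens_index (mxtens_index ((mxtens_unindex r).1, ord0), (mxtens_unindex r).2).
apply: (unitary_mx_reindex (s := s)).
  exists (fun t => mxtens_index ((mxtens_unindex (mxtens_unindex t).1).1,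
                                 (mxtens_unindex t).2)) => r.
    by rewrite /s !mxtens_indexK /= mxtens_unindexK.
  case: (mxtens_indexP r) => a z; case: (mxtens_indexP a) => b o.
  by rewrite /s !mxtens_indexK /= (ord1 o).
move=> r c; case: (mxtens_indexP r) => f x; case: (mxtens_indexP c) => p y.
rewrite amplE blkE !mxE /ux3 /ux2 /ix2 !mxtens_indexK /=.
by do 4!(apply: eq_bigr => ? _); rewrite tensmxE !mxE mulr1.
Qed.

End PureProcess.

Lemma partial_choice (A B : Type) (b0 : B) (P : A -> Prop) (Q : A -> B -> Prop) :
  (forall x, P x -> exists y, Q x y) -> exists f : A -> B, forall x, P x -> Q x (f x).
Proof.
move=> PQ; apply: (functional_choice (fun x y => P x -> Q x y)) => x.
by case: (classic (P x)) => [/PQ [y Qxy] | nPx]; [exists y | exists b0].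
Qed.

Section FrameFunctions.
Variable C : numClosedFieldType.
Variables (dP dA dB : nat) (w : 'cV[C]_(dP * dP * dA * dA * dB * dB)).
Hypotheses (w_pure : is_pure (proj_of w)) (dP_gt0 : (0 < dP)%N).

Lemma induced_map_frame_A : (0 < dA)%N ->
  exists (Pi : 'M[C]_dB -> 'M[C]_(dA * (dP %/ dA), dP))
         (Phi : 'M[C]_dB -> 'M[C]_(dP, dA * (dP %/ dA))),
    frame_function_A Pi Phi /\ forall UB, unitary_mx UB ->
      forall UA, induced_map w UA UB = Phi UB *m (UA *t 1%:M) *m Pi UB.
Proof.
move=> dA_gt0.
have fac UB : unitary_mx UB ->
    exists PP : 'M[C]_(dA * (dP %/ dA), dP) * 'M[C]_(dP, dA * (dP %/ dA)),
    [/\ unitary_mx PP.1, unitary_mx PP.2 &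
      forall UA, induced_map w UA UB = PP.2 *m (UA *t 1%:M) *m PP.1].
  move/(induced_mapl_unitary_preserving2 w_pure dP_gt0).
  by case/unitary_preserving2_factor => // Phi [Pi [? ? ?]]; exists (Pi, Phi).
have [f hf] := partial_choice (0, 0) fac.
exists (fun UB => (f UB).1), (fun UB => (f UB).2).
by split=> [UB /hf [] | UB /hf []].
Qed.

Lemma induced_map_frame_B : (0 < dB)%N ->
  exists (Pi : 'M[C]_dA -> 'M[C]_(dB * (dP %/ dB), dP))
         (Phi : 'M[C]_dA -> 'M[C]_(dP, dB * (dP %/ dB))),
    frame_function_B Pi Phi /\ forall UA, unitary_mx UA ->
      forall UB, induced_map w UA UB = Phi UA *m (UB *t 1%:M) *m Pi UA.
Proof.
move=> dB_gt0.
have fac UA : unitary_mx UA ->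
    exists PP : 'M[C]_(dB * (dP %/ dB), dP) * 'M[C]_(dP, dB * (dP %/ dB)),
    [/\ unitary_mx PP.1, unitary_mx PP.2 &
      forall UB, induced_map w UA UB = PP.2 *m (UB *t 1%:M) *m PP.1].
  move/(induced_mapr_unitary_preserving2 w_pure dP_gt0).
  by case/unitary_preserving2_factor => // Phi [Pi [? ? ?]]; exists (Pi, Phi).
have [f hf] := partial_choice (0, 0) fac.
exists (fun UA => (f UA).1), (fun UA => (f UA).2).
by split=> [UA /hf [] | UA /hf []].
Qed.

End FrameFunctions.

Unset Implicit Arguments.

Theorem theorem4 (R : realType) (dP dF dAI dAO dBI dBO : nat)
  (w : 'cV[R[i]]_(dP * dF * dAI * dAO * dBI * dBO)) :
  (0 < dP)%N -> (0 < dAI)%N -> (0 < dBI)%N ->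
  dAI = dAO -> dBI = dBO -> dP = dF ->
  is_pure_process (proj_of w) ->
  exists (dEA dEB : nat), dP = (dAI * dEA)%N /\ dP = (dBI * dEB)%N /\
  exists (PiA : 'M[R[i]]_(dBO, dBI) -> 'M[R[i]]_(dAI * dEA, dP))
         (PhiA : 'M[R[i]]_(dBO, dBI) -> 'M[R[i]]_(dF, dAO * dEA))
         (PiB : 'M[R[i]]_(dAO, dAI) -> 'M[R[i]]_(dBI * dEB, dP))
         (PhiB : 'M[R[i]]_(dAO, dAI) -> 'M[R[i]]_(dF, dBO * dEB)),
    frame_function_A PiA PhiA /\ frame_function_B PiB PhiB /\
    forall (UA : 'M[R[i]]_(dAO, dAI)) (UB : 'M[R[i]]_(dBO, dBI)),
      unitary_mx UA -> unitary_mx UB ->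
      induced_map w UA UB = PhiA UB *m (UA *t (1%:M : 'M[R[i]]_dEA)) *m PiA UB /\
      induced_map w UA UB = PhiB UA *m (UB *t (1%:M : 'M[R[i]]_dEB)) *m PiB UA.
Proof.
move=> dP_gt0 dA_gt0 dB_gt0 eA eB eP [_ w_pure]; subst dAO dBO dF.
have [PiA [PhiA [frameA eGA]]] := induced_map_frame_A w_pure dP_gt0 dA_gt0.
have [PiB [PhiB [frameB eGB]]] := induced_map_frame_B w_pure dP_gt0 dB_gt0.
exists (dP %/ dAI)%N, (dP %/ dBI)%N; split; [|split].
- by have [_ /unitary_mx_dim] := frameA _ (unitary_mx1 _ dBI).
- by have [_ /unitary_mx_dim] := frameB _ (unitary_mx1 _ dAI).
exists PiA, PhiA, PiB, PhiB; do 2!split => //.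
by move=> UA UB hUA hUB; split; [exact: eGA | exact: eGB].
Qed.
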